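(* (1) Let $a_{n,j}=2^j\binom nj$ for integers $n\geq 3$, $0\leq j\leq n$. Then for all integers $m\geq2$ and $0\leq l\leq m-1$, $$\frac{a_{3m-3,\,3m-l-3}}{a_{3m-3,\,l+m-1}}\leq\frac{a_{3m-2,\,3m-l-2}}{a_{3m-2,\,l+m-1}}\leq\frac{a_{3m-1,\,3m-l-1}}{a_{3m-1,\,l+m-1}}\leq 9.$$ (2) Let $a_{n,j}=3^j\binom nj$ for integers $n\geq2$, $0\leq j\leq n$. Then for all integers $m\geq2$ and $0\leq l\leq\lfloor (m-1)/2\rfloor$, $$\frac{a_{2m-2,\,2m-l-2}}{a_{2m-2,\,l+m-1}}\leq\frac{a_{2m-1,\,2m-l-1}}{a_{2m-1,\,l+m-1}}\leq 8.$$ *)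

From HB Require Import structures.
From mathcomp Require Import all_boot all_order all_algebra.
Set Implicit Arguments. Unset Strict Implicit. Unset Printing Implicit Defensive.
Import Order.TTheory GRing.Theory Num.Theory.

Definition acoef (c n j : nat) : rat := ((c ^ j * 'C(n, j))%N)%:R.

From HB Require Import structures.
From mathcomp Require Import all_boot all_order all_algebra.
From mathcomp Require Import ring zify.
Import Order.TTheory GRing.Theory Num.Theory.
Local Open Scope ring_scope.

(* Since a_{j+k,j} = (j+k)! c^j / (j! k!), the factorial cancels in a ratio of two
   coefficients of the same row, leaving a ratio of weights c^j / (j! k!).  Going from
   row n to row n+1 raises j1 and k2 by one and multiplies the ratio by
   c (k2+1) / (j1+1) >= 1, which gives the chains of inequalities.  For the bounds,
   parametrize the last ratio by l and q = m-1-l (resp. e = m-1-2l): a unit step in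
   either parameter multiplies it by an explicit rational factor, and from every point
   one of the backward steps has factor at most 1.  By induction the ratio is thus
   bounded by its values at m = 2, namely 16/5 and 2 (resp. 3). *)

Definition wt (c j k : nat) : rat := (c ^ j)%:R / (j`! * k`!)%:R.

Lemma wt_gt0 c j k : (0 < c)%N -> 0 < wt c j k.
Proof. by move=> c_gt0; rewrite divr_gt0 ?ltr0n ?expn_gt0 ?c_gt0 ?muln_gt0 ?fact_gt0. Qed.

Lemma wt_neq0 c j k : (0 < c)%N -> wt c j k != 0.
Proof. by move=> c_gt0; rewrite gt_eqF ?wt_gt0. Qed.

Lemma wtSl c j k : wt c j.+1 k = wt c j k * (c%:R / j.+1%:R).
Proof.
rewrite /wt factS expnS !natrM.
by field; rewrite nat1r !pnatr_eq0 -!lt0n !fact_gt0.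
Qed.

Lemma wtSr c j k : wt c j k.+1 = wt c j k / k.+1%:R.
Proof. by rewrite /wt factS [(k.+1 * _)%N]mulnC mulnA natrM invfM mulrA. Qed.

Lemma acoef_wt c j k : acoef c (j + k) j = (j + k)`!%:R * wt c j k.
Proof.
have := bin_fact (leq_addr k j); rewrite addKn => binE.
rewrite /acoef /wt -binE !natrM.
by field; rewrite !pnatr_eq0 -!lt0n !fact_gt0.
Qed.

Lemma acoef_ratio c n i1 i2 j1 k1 j2 k2 : i1 = j1 -> i2 = j2 ->
  n = (j1 + k1)%N -> n = (j2 + k2)%N ->
  acoef c n i1 / acoef c n i2 = wt c j1 k1 / wt c j2 k2.
Proof.
move=> -> -> n1 n2; rewrite {1}n1 {1}n2 !acoef_wt -n1 -n2.
by rewrite invfM mulrACA divff ?mul1r // pnatr_eq0 -lt0n fact_gt0.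
Qed.

Lemma wt_ratio_succ c j1 k1 j2 k2 : (0 < c)%N ->
  wt c j1.+1 k1 / wt c j2 k2.+1 = wt c j1 k1 / wt c j2 k2 * ((c * k2.+1)%:R / j1.+1%:R).
Proof.
by move=> c_gt0; rewrite wtSl wtSr natrM; field; rewrite !nat1r !pnatr_eq0 wt_neq0.
Qed.

Lemma wt_ratio_le_succ c j1 k1 j2 k2 : (0 < c)%N -> (j1.+1 <= c * k2.+1)%N ->
  wt c j1 k1 / wt c j2 k2 <= wt c j1.+1 k1 / wt c j2 k2.+1.
Proof.
move=> c_gt0 le_j1; rewrite wt_ratio_succ //.
apply: ler_peMr; first by rewrite ltW // divr_gt0 ?wt_gt0.
by rewrite ler_pdivlMr ?ltr0n // mul1r ler_nat.
Qed.

Lemma wt_ratio_le_nat c j1 k1 j2 k2 (K : nat) : (0 < c)%N ->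
  (c ^ j1 * (j2`! * k2`!) <= K * (c ^ j2 * (j1`! * k1`!)))%N ->
  wt c j1 k1 / wt c j2 k2 <= K%:R.
Proof.
move=> c_gt0 le_K; rewrite /wt invf_div mulf_div -!natrM ler_pdivrMr; last first.
  by rewrite ltr0n !muln_gt0 expn_gt0 c_gt0 !fact_gt0.
by rewrite -natrM ler_nat [(_ * c ^ j2)%N]mulnC.
Qed.

Lemma mulr_nat_ratio_le (R : numFieldType) (x : R) (p d : nat) : 0 <= x -> (p <= d)%N -> (0 < d)%N ->
  x * (p%:R / d%:R) <= x.
Proof.
move=> x_ge0 le_pd d_gt0; apply: ler_piMr => //.
by rewrite ler_pdivrMr ?ltr0n // mul1r ler_nat.
Qed.

(* rho2 l (m-1-l) and rho3 l (m-1-2l) are the last ratios of parts (1) and (2). *)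
Definition rho2 (a q : nat) : rat := wt 2 (2 * a + 3 * q).+2 a / wt 2 (2 * a + q) (a + 2 * q).+2.

Lemma rho2_gt0 a q : 0 < rho2 a q.
Proof. by rewrite divr_gt0 ?wt_gt0. Qed.

Lemma rho2Sq a q : rho2 a q.+1 = rho2 a q *
  ((4 * (2 * a + q + 1) * (a + 2 * q + 3) * (a + 2 * q + 4))%:R /
   ((2 * a + 3 * q + 3) * (2 * a + 3 * q + 4) * (2 * a + 3 * q + 5))%:R).
Proof.
rewrite /rho2 (_ : 2 * a + 3 * q.+1 = (2 * a + 3 * q).+3)%N; last by lia.
rewrite (_ : 2 * a + q.+1 = (2 * a + q).+1)%N; last by lia.
rewrite (_ : a + 2 * q.+1 = (a + 2 * q).+2)%N; last by lia.
rewrite [(_ + 5)%N]addnS !addn1 !addn3 !addn4.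
move: (2 * a + 3 * q)%N (2 * a + q)%N (a + 2 * q)%N => A B C.
rewrite !wtSl !wtSr !natrM; field.
by rewrite !nat1r -!natrD !pnatr_eq0 !addn_eq0 wt_neq0.
Qed.

Lemma rho2Sa a q : rho2 a.+1 q = rho2 a q *
  (((2 * a + q + 1) * (2 * a + q + 2) * (a + 2 * q + 3))%:R /
   ((2 * a + 3 * q + 3) * (2 * a + 3 * q + 4) * (a + 1))%:R).
Proof.
rewrite /rho2 (_ : 2 * a.+1 + 3 * q = (2 * a + 3 * q).+2)%N; last by lia.
rewrite (_ : 2 * a.+1 + q = (2 * a + q).+2)%N; last by lia.
rewrite (_ : a.+1 + 2 * q = (a + 2 * q).+1)%N; last by lia.
rewrite !addn1 !addn2 !addn3 !addn4.
move: (2 * a + 3 * q)%N (2 * a + q)%N (a + 2 * q)%N => A B C.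
rewrite !wtSl !wtSr !natrM; field.
by rewrite !nat1r -!natrD !pnatr_eq0 !addn_eq0 wt_neq0.
Qed.

Lemma rho2Sq_le a q :
  (4 * (2 * a + q + 1) * (a + 2 * q + 3) * (a + 2 * q + 4) <=
   (2 * a + 3 * q + 3) * (2 * a + 3 * q + 4) * (2 * a + 3 * q + 5))%N ->
  rho2 a q.+1 <= rho2 a q.
Proof. by move=> le_pd; rewrite rho2Sq mulr_nat_ratio_le ?ltW ?rho2_gt0 //; lia. Qed.

Lemma rho2Sa_le a q :
  ((2 * a + q + 1) * (2 * a + q + 2) * (a + 2 * q + 3) <=
   (2 * a + 3 * q + 3) * (2 * a + 3 * q + 4) * (a + 1))%N ->
  rho2 a.+1 q <= rho2 a q.
Proof. by move=> le_pd; rewrite rho2Sa mulr_nat_ratio_le ?ltW ?rho2_gt0 //; lia. Qed.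

Lemma rho2_le9 n a q : (a + q = n.+1)%N -> rho2 a q <= 9%:R.
Proof.
elim: n a q => [|n IH] a q aq.
  case: a aq => [|[|a]] aq; last lia.
    have -> : q = 1%N by lia.
    by apply: wt_ratio_le_nat.
  have -> : q = 0%N by lia.
  by apply: wt_ratio_le_nat.
case: a aq => [|a] aq.
  have -> : q = n.+2 by lia.
  by apply: le_trans (rho2Sq_le _ _ _) (IH 0 n.+1 _); [nia | lia].
case: q aq => [|q] aq.
  by apply: le_trans (rho2Sa_le _ _ _) (IH a 0 _); [nia | lia].
(* when q(q+2) <= 3(a+q) the a-step has factor at most 1, otherwise the q-step has *)
have [small_q | big_q] := leqP (q.+1 * q.+3) (3 * (a.+1 + q.+1)).
  by apply: le_trans (rho2Sa_le _ _ _) (IH a q.+1 _); [nia | lia].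
by apply: le_trans (rho2Sq_le _ _ _) (IH a.+1 q _); [nia | lia].
Qed.

Definition rho3 (a e : nat) : rat := wt 3 (3 * a + 2 * e).+1 a / wt 3 (3 * a + e) (a + e).+1.

Lemma rho3_gt0 a e : 0 < rho3 a e.
Proof. by rewrite divr_gt0 ?wt_gt0. Qed.

Lemma rho3Se a e : rho3 a e.+1 = rho3 a e *
  ((3 * (3 * a + e + 1) * (a + e + 2))%:R / ((3 * a + 2 * e + 2) * (3 * a + 2 * e + 3))%:R).
Proof.
rewrite /rho3 (_ : 3 * a + 2 * e.+1 = (3 * a + 2 * e).+2)%N; last by lia.
rewrite (_ : 3 * a + e.+1 = (3 * a + e).+1)%N; last by lia.
rewrite (_ : a + e.+1 = (a + e).+1)%N; last by lia.
rewrite !addn1 !addn2 !addn3.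
move: (3 * a + 2 * e)%N (3 * a + e)%N (a + e)%N => A B C.
rewrite !wtSl !wtSr !natrM; field.
by rewrite !nat1r -!natrD !pnatr_eq0 !addn_eq0 wt_neq0.
Qed.

Lemma rho3Sa a e : rho3 a.+1 e = rho3 a e.+1 *
  (((3 * a + e + 2) * (3 * a + e + 3))%:R / (3 * (3 * a + 2 * e + 4) * (a + 1))%:R).
Proof.
rewrite /rho3 (_ : 3 * a.+1 + 2 * e = (3 * a + 2 * e).+3)%N; last by lia.
rewrite (_ : 3 * a + 2 * e.+1 = (3 * a + 2 * e).+2)%N; last by lia.
rewrite (_ : 3 * a.+1 + e = (3 * a + e).+3)%N; last by lia.
rewrite (_ : 3 * a + e.+1 = (3 * a + e).+1)%N; last by lia.
rewrite (_ : a.+1 + e = a + e.+1)%N; last by lia.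
rewrite !addn1 !addn2 !addn3 !addn4.
move: (3 * a + 2 * e)%N (3 * a + e)%N (a + e.+1)%N => A B C.
rewrite !wtSl !wtSr !natrM; field.
by rewrite !nat1r -!natrD !pnatr_eq0 !addn_eq0 wt_neq0.
Qed.

Lemma rho3Se_le a e :
  (3 * (3 * a + e + 1) * (a + e + 2) <= (3 * a + 2 * e + 2) * (3 * a + 2 * e + 3))%N ->
  rho3 a e.+1 <= rho3 a e.
Proof. by move=> le_pd; rewrite rho3Se mulr_nat_ratio_le ?ltW ?rho3_gt0 //; lia. Qed.

Lemma rho3Sa_le a e :
  ((3 * a + e + 2) * (3 * a + e + 3) <= 3 * (3 * a + 2 * e + 4) * (a + 1))%N ->
  rho3 a.+1 e <= rho3 a e.+1.
Proof. by move=> le_pd; rewrite rho3Sa mulr_nat_ratio_le ?ltW ?rho3_gt0 //; lia. Qed.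

Lemma rho3_le8 n a e : (2 * a + e = n.+1)%N -> rho3 a e <= 8%:R.
Proof.
elim: n a e => [|n IH] a e ae.
  have [-> ->] : a = 0%N /\ e = 1%N by lia.
  by apply: wt_ratio_le_nat.
case: a ae => [|a] ae.
  have -> : e = n.+2 by lia.
  by apply: le_trans (rho3Se_le _ _ _) (IH 0 n.+1 _); [nia | lia].
(* when e^2 <= 6(a+1)+e the a-step has factor at most 1, otherwise the e-step has *)
have [small_e | big_e] := leqP (e * e) (6 * a.+1 + e).
  by apply: le_trans (rho3Sa_le _ _ _) (IH a e.+1 _); [nia | lia].
case: e ae big_e => [|e] ae big_e; first lia.
by apply: le_trans (rho3Se_le _ _ _) (IH a.+1 e _); [nia | lia].
Qed.

Theorem lemma3p5 :
  (forall m l : nat, (2 <= m)%N -> (l <= m - 1)%N ->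
     acoef 2 ((3 * m)%N - 3)%N ((3 * m)%N - l - 3)%N / acoef 2 ((3 * m)%N - 3)%N (l + m - 1)%N
       <= acoef 2 ((3 * m)%N - 2)%N ((3 * m)%N - l - 2)%N / acoef 2 ((3 * m)%N - 2)%N (l + m - 1)%N
     /\ acoef 2 ((3 * m)%N - 2)%N ((3 * m)%N - l - 2)%N / acoef 2 ((3 * m)%N - 2)%N (l + m - 1)%N
       <= acoef 2 ((3 * m)%N - 1)%N ((3 * m)%N - l - 1)%N / acoef 2 ((3 * m)%N - 1)%N (l + m - 1)%N
     /\ acoef 2 ((3 * m)%N - 1)%N ((3 * m)%N - l - 1)%N / acoef 2 ((3 * m)%N - 1)%N (l + m - 1)%N <= 9%:R)
  /\
  (forall m l : nat, (2 <= m)%N -> (l <= (m - 1)./2)%N ->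
     acoef 3 ((2 * m)%N - 2)%N ((2 * m)%N - l - 2)%N / acoef 3 ((2 * m)%N - 2)%N (l + m - 1)%N
       <= acoef 3 ((2 * m)%N - 1)%N ((2 * m)%N - l - 1)%N / acoef 3 ((2 * m)%N - 1)%N (l + m - 1)%N
     /\ acoef 3 ((2 * m)%N - 1)%N ((2 * m)%N - l - 1)%N / acoef 3 ((2 * m)%N - 1)%N (l + m - 1)%N <= 8%:R).
Proof.
split=> m l m_ge2 l_le.
  have [q mE] : exists q, m = (l + q + 1)%N by exists (m - 1 - l)%N; lia.
  subst m.
  rewrite (@acoef_ratio 2 _ _ _ (2 * l + 3 * q) l (2 * l + q) (l + 2 * q)); try by lia.
  rewrite (@acoef_ratio 2 _ _ _ (2 * l + 3 * q).+1 l (2 * l + q) (l + 2 * q).+1); try by lia.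
  rewrite (@acoef_ratio 2 _ _ _ (2 * l + 3 * q).+2 l (2 * l + q) (l + 2 * q).+2); try by lia.
  split; first by apply: wt_ratio_le_succ => //; lia.
  split; first by apply: wt_ratio_le_succ => //; lia.
  by apply: (@rho2_le9 (l + q).-1); lia.
have l_le_half : (2 * l <= m - 1)%N by have := odd_double_half (m - 1); lia.
have [e mE] : exists e, m = (2 * l + e + 1)%N by exists (m - 1 - 2 * l)%N; lia.
subst m.
rewrite (@acoef_ratio 3 _ _ _ (3 * l + 2 * e) l (3 * l + e) (l + e)); try by lia.
rewrite (@acoef_ratio 3 _ _ _ (3 * l + 2 * e).+1 l (3 * l + e) (l + e).+1); try by lia.
split; first by apply: wt_ratio_le_succ => //; lia.
by apply: (@rho3_le8 (2 * l + e).-1); lia.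
Qed.
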